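(* Let $V$ be a graded generalized Eulerian $A_n(K)$-module and let $1\le r\le n$. Then: (1) for all $\nu\ge0$, $H^\nu(\partial_r,\partial_{r+1},\dots,\partial_n;V)(-n+r-1)$ is a generalized Eulerian $A_{r-1}(K)$-module; (2) for all $\nu\ge0$, $H^\nu(X_r,\dots,X_n;V)$ is a generalized Eulerian $A_{r-1}(K)$-module; (3) for all $\nu\ge0$, $H^\nu(X_1,\dots,X_{r-1},\partial_r,\partial_{r+1},\dots,\partial_n;V)$ is a graded $K$-vector space concentrated in degree $-n+r-1$.
   Context: Let $K$ be a field of characteristic zero, $R=K[X_1,\dots,X_n]$ with standard grading. $A_n(K)=K\langle X_1,\dots,X_n,\partial_1,\dots,\partial_n\rangle$ is the $n$-th Weyl algebra ($\partial_iX_j-X_j\partial_i=\delta_{ij}$), graded by $\deg X_i=1$, $\deg\partial_i=-1$. The Euler operator is $\mathcal E_n=\sum_{i=1}^nX_i\partial_i$; $|z|$ denotes the degree of a homogeneous $z$. A graded left $A_n(K)$-module $M$ is generalized Eulerian if for every homogeneous $z\in M$ there is $a\ge1$ with $(\mathcal E_n-|z|)^az=0$. For $m\le n$, $A_m(K)=K\langle X_1,\dots,X_m,\partial_1,\dots,\partial_m\rangle\subseteq A_n(K)$ with Euler operator $\mathcal E_m=\sum_{i\le m}X_i\partial_i$, and ''generalized Eulerian $A_m(K)$-module'' is defined with $\mathcal E_m$; for $m=0$, $A_0(K)=K$, $\mathcal E_0=0$, and a graded vector space is generalized Eulerian iff it is concentrated in degree $0$. $M(l)_j=M_{j+l}$.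 Koszul (co)homology: for pairwise commuting homogeneous $u_1,\dots,u_\ell\in A_n(K)$ and a graded left $A_n(K)$-module $V$, the Koszul complex has $K_p=\bigoplus_{i_1<\dots<i_p}V(-(\deg u_{i_1}+\dots+\deg u_{i_p}))$ with the usual Koszul differentials (left multiplication by the $u_i$ with signs), homogeneous of degree $0$, so $H_0(u;V)=V/\sum u_iV$ with the grading of $V$. $H_p(u_1,\dots,u_\ell;V)$ denotes its homology and $H^\nu(u_1,\dots,u_\ell;V):=H_{\ell-\nu}(u_1,\dots,u_\ell;V)$. Elements of $A_n(K)$ commuting with all $u_i$ act on these; in particular $H^\nu(\partial_r,\dots,\partial_n;V)$ and $H^\nu(X_r,\dots,X_n;V)$ are graded $A_{r-1}(K)$-modules. *)

From HB Require Import structures.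
From mathcomp Require Import all_boot all_order all_algebra.
Set Implicit Arguments. Unset Strict Implicit. Unset Printing Implicit Defensive.
Import Order.TTheory GRing.Theory Num.Theory.
Local Open Scope ring_scope.

(* A Z-graded K-vector space: V is the internal direct sum of the subspaces
   [hom j] (elements homogeneous of degree j). *)
Definition graded_vs (K : fieldType) (V : lmodType K) (hom : int -> pred V) : Prop :=
  [/\ (forall j, 0 \in hom j),
      (forall j (a : K) (u v : V), u \in hom j -> v \in hom j -> a *: u + v \in hom j),
      (forall v : V, exists (s : seq int) (f : int -> V),
          (forall j, f j \in hom j) /\ v = \sum_(j <- s) f j) &
      (forall (s : seq int) (f : int -> V), uniq s -> (forall j, f j \in hom j) ->
          \sum_(j <- s) f j = 0 -> forall j, j \in s -> f j = 0)].

(* A graded left A_n(K)-module: a graded K-vector space V with K-linear operators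
   X i, D i (i : 'I_n; X i stands for X_{i+1}, D i for the partial derivative
   d_{i+1}) satisfying the defining relations of the Weyl algebra, with
   deg X_i = 1 and deg d_i = -1. *)
Definition graded_weyl_module (K : fieldType) (n : nat) (V : lmodType K)
    (hom : int -> pred V) (X D : 'I_n -> V -> V) : Prop :=
  graded_vs hom /\
  (forall i (a : K) (u v : V), X i (a *: u + v) = a *: X i u + X i v) /\
  (forall i (a : K) (u v : V), D i (a *: u + v) = a *: D i u + D i v) /\
  (forall i j v, X i (X j v) = X j (X i v)) /\
  (forall i j v, D i (D j v) = D j (D i v)) /\
  (forall i j v, D i (X j v) - X j (D i v) = (i == j)%:R *: v) /\
  (forall i j v, v \in hom j -> X i v \in hom (j + 1) /\ D i v \in hom (j - 1)).

(* Euler operator E_m = sum_{i <= m} X_i d_i (0-based: indices i < m). *)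
Definition euler (K : fieldType) (n : nat) (V : lmodType K) (X D : 'I_n -> V -> V)
    (m : nat) (v : V) : V :=
  \sum_(i < n | (i < m)%N) X i (D i v).

Definition shifted_pow (K : fieldType) (V : lmodType K) (T : V -> V) (c : int)
    (a : nat) (v : V) : V :=
  iter a (fun w => T w - c%:~R *: w) v.

Definition gen_eulerian (K : fieldType) (n : nat) (V : lmodType K)
    (hom : int -> pred V) (X D : 'I_n -> V -> V) : Prop :=
  forall (j : int) (v : V), v \in hom j ->
    exists a : nat, (0 < a)%N /\ shifted_pow (euler X D n) j a v = 0.

(* ---- Koszul complex of pairwise commuting operators u_i, i in S ⊆ 'I_n ----
   A chain is a function f : {set 'I_n} -> V, f I being the coefficient of e_I;
   it must be supported on subsets I of S. The differential is
   d(e_I ⊗ v) = sum_{i in I} (-1)^{#{k in I, k < i}} e_{I\{i}} ⊗ u_i v.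
   Cohomological degree nu corresponds to homological degree #|S| - nu,
   i.e. to subsets I with #|I| + nu = #|S|. *)
Definition kdiff (K : fieldType) (n : nat) (V : lmodType K) (u : 'I_n -> V -> V)
    (S : {set 'I_n}) (f : {set 'I_n} -> V) (J : {set 'I_n}) : V :=
  \sum_(i in S :\: J) ((-1 : K) ^+ #|[set k in J | (k < i)%N]|) *: u i (f (i |: J)).

Definition kcochain (K : fieldType) (n : nat) (V : lmodType K)
    (S : {set 'I_n}) (nu : nat) (f : {set 'I_n} -> V) : Prop :=
  forall I, f I != 0 -> (I \subset S) /\ (#|I| + nu = #|S|)%N.

Definition kcycle (K : fieldType) (n : nat) (V : lmodType K) (u : 'I_n -> V -> V)
    (S : {set 'I_n}) (nu : nat) (f : {set 'I_n} -> V) : Prop :=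
  kcochain S nu f /\ forall J, kdiff u S f J = 0.

Definition kboundary (K : fieldType) (n : nat) (V : lmodType K) (u : 'I_n -> V -> V)
    (S : {set 'I_n}) (nu : nat) (f : {set 'I_n} -> V) : Prop :=
  exists g : {set 'I_n} -> V,
    (forall I, g I != 0 -> (I \subset S) /\ (#|I| + nu = #|S|.+1)%N) /\
    (forall J, f J = kdiff u S g J).

(* f is homogeneous of degree d in the graded Koszul complex: the summand
   indexed by I is V(-(sum_{i in I} deg u_i)), so f I must have degree
   d - sum_{i in I} deg u_i in V. *)
Definition khom (K : fieldType) (n : nat) (V : lmodType K) (hom : int -> pred V)
    (du : 'I_n -> int) (d : int) (f : {set 'I_n} -> V) : Prop :=
  forall I, f I \in hom (d - \sum_(i in I) du i).

(* H^nu(u_i, i in S; V)(shift) is a generalized Eulerian module for the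
   operator E (acting componentwise): every homogeneous class [f] of degree
   d in H^nu (hence of degree d + shift in the shifted module) satisfies
   (E - (d + shift))^a [f] = 0 for some a >= 1, i.e. the representative
   (E - (d+shift))^a f is a boundary. *)
Definition koszul_gen_eulerian (K : fieldType) (n : nat) (V : lmodType K)
    (hom : int -> pred V) (u : 'I_n -> V -> V) (du : 'I_n -> int)
    (S : {set 'I_n}) (E : V -> V) (shift : int) : Prop :=
  forall (nu : nat) (d : int) (f : {set 'I_n} -> V),
    kcycle u S nu f -> khom hom du d f ->
    exists a : nat, (0 < a)%N /\
      kboundary u S nu (fun I => shifted_pow E (d + shift) a (f I)).

Definition koszul_concentrated (K : fieldType) (n : nat) (V : lmodType K)
    (hom : int -> pred V) (u : 'I_n -> V -> V) (du : 'I_n -> int)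
    (S : {set 'I_n}) (d0 : int) : Prop :=
  forall (nu : nat) (d : int) (f : {set 'I_n} -> V),
    kcycle u S nu f -> khom hom du d f -> d != d0 -> kboundary u S nu f.

From HB Require Import structures.
From mathcomp Require Import all_boot all_order all_algebra.
From mathcomp Require Import ring zify.
Import GRing.Theory.
Set Implicit Arguments. Unset Strict Implicit. Unset Printing Implicit Defensive.
Local Open Scope ring_scope.

(* Let the Koszul complex be built on operators u_i (i in S), each u_i being X_i
   or ∂_i, and let w_i be the partner of u_i (∂_i resp. X_i).  The map
   h = Σ ± w_i is a homotopy: d h + h d acts on the e_J-component as
   P_J = Σ_(i in S) X_i ∂_i + (a scalar depending on J).  The Euler operator E_n,
   shifted by the degree of the e_J-component, commutes with the Koszul
   differential d and is nilpotent on a homogeneous cycle f because V is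
   generalized Eulerian.  Subtracting P_J leaves E' - c, where E' is the Euler
   operator of the variables outside S and c = deg f + #{i in S | u_i = ∂_i}
   does not depend on J; so (E' - c)^a f is a boundary for large a.  Parts (1)
   and (2) are the cases u = ∂ and u = X on S = {r, ..., n}; in part (3) S is
   everything, E' = 0, and (-c)^a f is a boundary with c <> 0 unless
   deg f = -n + r - 1. *)

Section LinearFunctions.

Variables (K : fieldType) (V : lmodType K) (f : V -> V).
Hypothesis f_lin : linear f.

Lemma linfB : {morph f : x y / x - y}.
Proof. exact: zmod_morphism_linear f_lin. Qed.

Lemma linf0 : f 0 = 0.
Proof. by rewrite -[0 in LHS](subrr 0) linfB subrr. Qed.

Lemma linfD : {morph f : x y / x + y}.
Proof. by move=> x y; rewrite -{1}[x]scale1r f_lin scale1r. Qed.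

Lemma linfZ a : {morph f : v / a *: v}.
Proof. by move=> v; rewrite -[a *: v]addr0 f_lin linf0 addr0. Qed.

Lemma linf_sum (I : Type) (r : seq I) (P : pred I) (F : I -> V) :
  f (\sum_(i <- r | P i) F i) = \sum_(i <- r | P i) f (F i).
Proof. exact: (big_morph f linfD linf0). Qed.

Lemma linear_subZ (c : K) : linear (fun v => f v - c *: v).
Proof.
move=> a x y; rewrite f_lin scalerDr scalerA mulrC -scalerA.
by rewrite opprD addrACA -scalerBr.
Qed.

Lemma iter_linf_eq0 a b v : iter a f v = 0 -> (a <= b)%N -> iter b f v = 0.
Proof.
move=> fav0 /subnK <-; rewrite iterD fav0.
by elim: (b - a)%N => //= k ->; apply: linf0.
Qed.

End LinearFunctions.

Lemma setU1D1 (T : finType) (A : {set T}) (i j : T) :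
  i != j -> (j |: A) :\ i = j |: (A :\ i).
Proof.
by move=> ij; apply/setP => k; rewrite !inE; case: (k =P i) => [->|] //=; rewrite (negbTE ij).
Qed.

Lemma sumr_pred1Z (K : fieldType) (V : lmodType K) (T : finType) (A : {set T})
    (i : T) (F : T -> V) :
  \sum_(k in A) (k == i)%:R *: F k = (i \in A)%:R *: F i.
Proof.
case: (boolP (i \in A)) => iA.
  rewrite (bigD1 i) //= eqxx big1 ?addr0 // => k /andP [_ /negbTE ->].
  by rewrite scale0r.
rewrite scale0r big1 // => k kA; case: eqP kA iA => [-> -> // | _ _ _].
by rewrite scale0r.
Qed.

Section KoszulComplex.

Variables (K : fieldType) (n : nat) (V : lmodType K).
Variables (u : 'I_n -> V -> V) (S : {set 'I_n}).
Hypothesis u_lin : forall i, linear (u i).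

Definition ksign (J : {set 'I_n}) (i : 'I_n) : K :=
  (-1) ^+ #|[set k in J | (k < i)%N]|.

Lemma ksign_sqr (J : {set 'I_n}) (i : 'I_n) : ksign J i * ksign J i = 1.
Proof. by rewrite -exprD addnn -mul2n exprM sqrrN !expr1n. Qed.

Lemma ksign_setU1 (J : {set 'I_n}) (x i : 'I_n) : x \notin J ->
  ksign (x |: J) i = (if (x < i)%N then -1 else 1) * ksign J i.
Proof.
move=> xJ; rewrite /ksign; case: ifP => xi.
  have -> : [set k in x |: J | (k < i)%N] = x |: [set k in J | (k < i)%N].
    by apply/setP => k; rewrite !inE; case: eqP => // ->; rewrite xi.
  by rewrite cardsU1 !inE (negbTE xJ) exprS.
have -> : [set k in x |: J | (k < i)%N] = [set k in J | (k < i)%N].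
  by apply/setP => k; rewrite !inE; case: eqP => // ->; rewrite xi (negbTE xJ).
by rewrite mul1r.
Qed.

Lemma ksign_swap (J : {set 'I_n}) (i j : 'I_n) : i \in J -> j \notin J ->
  ksign J j * ksign (j |: (J :\ i)) i = - (ksign (J :\ i) i * ksign (J :\ i) j).
Proof.
move=> iJ jJ; have ij : i != j by apply: contraNneq jJ => <-.
have iJi : i \notin J :\ i by rewrite !inE eqxx.
have jJi : j \notin J :\ i by rewrite !inE (negbTE jJ) andbF.
rewrite -{1}(setD1K iJ) !ksign_setU1 //.
case: (ltngtP i j) => [_|_|/val_inj eij]; last by rewrite eij eqxx in ij.
  by rewrite !(mulN1r, mul1r, mulNr, mulrN) mulrC.
by rewrite !(mulN1r, mul1r, mulNr, mulrN) mulrC.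
Qed.

Lemma kdiffZD a f g J :
  kdiff u S (fun I => a *: f I + g I) J = a *: kdiff u S f J + kdiff u S g J.
Proof.
rewrite /kdiff scaler_sumr -big_split; apply: eq_bigr => i _.
by rewrite u_lin scalerDr !scalerA mulrC.
Qed.

Lemma eq_kboundary nu f f' :
  f =1 f' -> kboundary u S nu f -> kboundary u S nu f'.
Proof. by move=> eqf [g [g_supp fE]]; exists g; split => // J; rewrite -eqf. Qed.

Lemma kboundary0 nu : kboundary u S nu (fun _ => 0).
Proof.
exists (fun _ => 0); split=> [I|J]; first by rewrite eqxx.
by rewrite /kdiff big1 // => i _; rewrite linf0 ?scaler0.
Qed.

Lemma kboundaryZD nu a f g :
  kboundary u S nu f -> kboundary u S nu g ->
  kboundary u S nu (fun I => a *: f I + g I).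
Proof.
move=> [f' [f'_supp fE]] [g' [g'_supp gE]].
exists (fun I => a *: f' I + g' I); split=> [I|J]; last by rewrite kdiffZD fE gE.
case: (eqVneq (f' I) 0) => [f'I0 | /f'_supp //].
by rewrite f'I0 scaler0 add0r => /g'_supp.
Qed.

Definition kchain_map (T : {set 'I_n} -> V -> V) :=
  forall J i v, i \in S :\: J -> T J (u i v) = u i (T (i |: J) v).

Section ChainMaps.

Variable T : {set 'I_n} -> V -> V.
Hypotheses (T_lin : forall J, linear (T J)) (T_chain : kchain_map T).

Lemma kdiff_map f J : kdiff u S (fun I => T I (f I)) J = T J (kdiff u S f J).
Proof.
rewrite /kdiff linf_sum //; apply: eq_bigr => i iSJ.
by rewrite linfZ // T_chain.
Qed.

Lemma kcycle_map nu f : kcycle u S nu f -> kcycle u S nu (fun I => T I (f I)).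
Proof.
move=> [f_supp f_closed]; split=> [I TfI | J]; last by rewrite kdiff_map f_closed linf0.
by apply: f_supp; apply: contraNneq TfI => ->; rewrite linf0.
Qed.

Lemma kboundary_map nu f :
  kboundary u S nu f -> kboundary u S nu (fun I => T I (f I)).
Proof.
move=> [g [g_supp fE]]; exists (fun I => T I (g I)); split=> [I TgI | J].
  by apply: g_supp; apply: contraNneq TgI => ->; rewrite linf0.
by rewrite kdiff_map fE.
Qed.

End ChainMaps.

Lemma kchain_map_degree_shift (E : V -> V) (du : 'I_n -> int) (d : int) :
  (forall i v, i \in S -> E (u i v) = u i (E v) + (du i)%:~R *: u i v) ->
  kchain_map (fun J v => E v - (d - \sum_(i in J) du i)%:~R *: v).
Proof.
move=> Eu J i v; rewrite inE => /andP [iJ iS].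
rewrite Eu // (linfB (u_lin i)) (linfZ (u_lin i)) big_setU1 //= -addrA.
by congr (_ + _); rewrite -scalerBl -intrB -scaleNr -intrN; congr (_%:~R *: _); ring.
Qed.

Lemma kchain_map_const_shift (E : V -> V) (c : K) :
  (forall i v, i \in S -> E (u i v) = u i (E v)) ->
  kchain_map (fun _ v => E v - c *: v).
Proof.
move=> Eu J i v; rewrite inE => /andP [_ iS].
by rewrite Eu // (linfB (u_lin i)) (linfZ (u_lin i)).
Qed.

Section Contraction.

Variable w : 'I_n -> V -> V.
Hypothesis w_lin : forall i, linear (w i).
Hypothesis w_u_comm :
  forall i j v, i \in S -> j \in S -> i != j -> w i (u j v) = u j (w i v).

Definition khomotopy (g : {set 'I_n} -> V) (I : {set 'I_n}) : V :=
  \sum_(i in I :&: S) ksign (I :\ i) i *: w i (g (I :\ i)).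

Definition kcontraction (J : {set 'I_n}) (v : V) : V :=
  \sum_(i in S :\: J) u i (w i v) + \sum_(i in J :&: S) w i (u i v).

Lemma kdiff_khomotopy g J :
  kdiff u S (khomotopy g) J = \sum_(j in S :\: J) u j (w j (g J)) +
    \sum_(j in S :\: J) \sum_(i in J :&: S)
      (ksign J j * ksign (j |: (J :\ i)) i) *: u j (w i (g (j |: (J :\ i)))).
Proof.
rewrite /kdiff -big_split; apply: eq_bigr => j; rewrite inE => /andP [jJ jS].
rewrite /khomotopy (bigD1 j) /=; last by rewrite !inE eqxx jS.
rewrite setU1K // linfD // linfZ // scalerDr scalerA ksign_sqr scale1r.
congr (_ + _); rewrite linf_sum // scaler_sumr.
apply: eq_big => [i | i /andP [_ ij]]; last by rewrite setU1D1 // linfZ // scalerA.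
by rewrite !inE; case: (i =P j) => [->|_] /=; rewrite ?(negbTE jJ) ?andbF ?andbT.
Qed.

Lemma khomotopy_kdiff g J :
  khomotopy (kdiff u S g) J = \sum_(i in J :&: S) w i (u i (g J)) +
    \sum_(i in J :&: S) \sum_(j in S :\: J)
      (ksign (J :\ i) i * ksign (J :\ i) j) *: w i (u j (g (j |: (J :\ i)))).
Proof.
rewrite /khomotopy -big_split; apply: eq_bigr => i; rewrite inE => /andP [iJ iS].
rewrite /kdiff (bigD1 i) /=; last by rewrite !inE eqxx iS andbT.
rewrite setD1K // linfD // linfZ // scalerDr scalerA ksign_sqr scale1r.
congr (_ + _); rewrite linf_sum // scaler_sumr.
apply: eq_big => [j | j _]; last by rewrite linfZ // scalerA.
by rewrite !inE; case: (j =P i) => [->|_] /=; rewrite ?iJ ?andbF ?andbT.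
Qed.

(* The cross terms of [d h + h d] cancel by [ksign_swap]. *)
Lemma kdiff_khomotopyD g J :
  kdiff u S (khomotopy g) J + khomotopy (kdiff u S g) J = kcontraction J (g J).
Proof.
rewrite kdiff_khomotopy khomotopy_kdiff addrACA -[RHS]addr0; congr (_ + _).
rewrite [X in _ + X]exchange_big -big_split big1 // => j /[!inE] /andP [jJ jS].
rewrite -big_split big1 // => i /[!inE] /andP [iJ iS].
have ij : i != j by apply: contraNneq jJ => <-.
by rewrite ksign_swap // w_u_comm // scaleNr; apply: addNr.
Qed.

Lemma khomotopy_support nu f I :
  kcochain S nu f -> khomotopy f I != 0 -> (I \subset S) /\ (#|I| + nu = #|S|.+1)%N.
Proof.
move=> f_supp nz.
have [i /[!inE] /andP [iI iS] /f_supp [sub card_eq]] :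
    exists2 i, i \in I :&: S & f (I :\ i) != 0.
  apply/exists_inP; apply: contraNT nz => /exists_inPn f0.
  by apply/eqP/big1 => i /f0 /negPn/eqP ->; rewrite linf0 ?scaler0.
split; last by rewrite (cardsD1 i I) iI add1n addSn card_eq.
apply/subsetP => k kI; case: (k =P i) => [-> // | /eqP ki].
by apply: (subsetP sub); rewrite !inE ki.
Qed.

Lemma kboundary_contraction nu f :
  kcycle u S nu f -> kboundary u S nu (fun J => kcontraction J (f J)).
Proof.
move=> [f_supp f_closed]; exists (khomotopy f); split=> [I | J].
  exact: khomotopy_support.
rewrite -kdiff_khomotopyD [X in _ + X]big1 ?addr0 // => i _.
by rewrite f_closed linf0 ?scaler0.
Qed.

Lemma kcontraction_lin J : linear (kcontraction J).
Proof.
move=> a x y; rewrite /kcontraction scalerDr !scaler_sumr addrACA -!big_split.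
congr (_ + _); apply: eq_bigr => i _; first by rewrite w_lin u_lin.
by rewrite u_lin w_lin.
Qed.

Section ShiftedOperators.

Variables N T : {set 'I_n} -> V -> V.
Hypotheses (N_lin : forall J, linear (N J)) (T_lin : forall J, linear (T J)).
Hypotheses (N_chain : kchain_map N) (T_chain : kchain_map T).
Hypothesis T_N_contraction :
  forall (J : {set 'I_n}) v, J \subset S -> T J v = N J v - kcontraction J v.

Lemma kboundary_iterB nu f : kcycle u S nu f ->
  forall k, kboundary u S nu (fun J => iter k (T J) (f J) - iter k (N J) (f J)).
Proof.
move=> f_cycle.
have Nf_cycle k : kcycle u S nu (fun J => iter k (N J) (f J)).
  by elim: k => // k; apply: kcycle_map.
elim=> [|k IHk]; first by apply: eq_kboundary (kboundary0 nu) => J; rewrite subrr.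
(* [T^(k+1) - N^(k+1) = T (T^k - N^k) - P N^k] on the support, where [N^k f] is a cycle. *)
have := kboundaryZD (-1) (kboundary_contraction (Nf_cycle k))
  (kboundary_map T_lin T_chain IHk).
apply: eq_kboundary => J /=.
set x := iter k (T J) (f J); set y := iter k (N J) (f J).
rewrite scaleN1r (linfB (T_lin J)).
case: (eqVneq y 0) => [-> | /(Nf_cycle k).1 [JS _]].
  by rewrite (linf0 (kcontraction_lin J)) (linf0 (N_lin J)) (linf0 (T_lin J)) oppr0 add0r.
by rewrite [T J y]T_N_contraction // opprB addrCA addKr.
Qed.

Lemma kboundary_iter_nilpotent nu f : kcycle u S nu f ->
  (forall J, exists a, iter a (N J) (f J) = 0) ->
  exists a, (0 < a)%N /\ kboundary u S nu (fun J => iter a (T J) (f J)).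
Proof.
move=> f_cycle /fin_all_exists [a Nf0]; exists (\max_J a J).+1; split=> //.
apply: eq_kboundary (kboundary_iterB f_cycle _) => J.
by rewrite (iter_linf_eq0 (N_lin J) (Nf0 J)) ?subr0 // ltnW // ltnS leq_bigmax.
Qed.

End ShiftedOperators.

End Contraction.

End KoszulComplex.

Section WeylAlgebra.

Variables (K : fieldType) (n : nat) (V : lmodType K) (X D : 'I_n -> V -> V).
Hypotheses (X_lin : forall i, linear (X i)) (D_lin : forall i, linear (D i)).
Hypotheses (XX : forall i j v, X i (X j v) = X j (X i v))
           (DD : forall i j v, D i (D j v) = D j (D i v))
           (DX : forall i j v, D i (X j v) - X j (D i v) = (i == j)%:R *: v).

Lemma DX_diag i v : D i (X i v) = X i (D i v) + v.
Proof. by apply/eqP; rewrite addrC -subr_eq DX eqxx scale1r. Qed.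

Lemma DX_comm i j v : i != j -> D i (X j v) = X j (D i v).
Proof. by move=> ij; apply/eqP; rewrite -subr_eq0 DX (negbTE ij) scale0r. Qed.

Definition euler_on (A : {set 'I_n}) (v : V) : V := \sum_(i in A) X i (D i v).

Lemma euler_on_lin A : linear (euler_on A).
Proof.
move=> a x y; rewrite /euler_on scaler_sumr -big_split.
by apply: eq_bigr => i _; rewrite D_lin X_lin.
Qed.

Lemma euler_onT : euler X D n =1 euler_on [set: 'I_n].
Proof. by move=> v; apply: eq_bigl => i; rewrite ltn_ord inE. Qed.

Lemma euler_on_setTC A v : euler_on [set: 'I_n] v = euler_on A v + euler_on (~: A) v.
Proof. by rewrite /euler_on (big_setID A) setTI setTD. Qed.

Lemma euler_onX (A : {set 'I_n}) i v :
  euler_on A (X i v) = X i (euler_on A v) + (i \in A)%:R *: X i v.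
Proof.
have XDX k : X k (D k (X i v)) = X i (X k (D k v)) + (k == i)%:R *: X k v.
  have DkXi : D k (X i v) = X i (D k v) + (k == i)%:R *: v.
    by apply/eqP; rewrite addrC -subr_eq DX.
  by rewrite DkXi linfD // linfZ // XX.
rewrite /euler_on (eq_bigr _ (fun k _ => XDX k)) big_split /= (linf_sum (X_lin i)).
by rewrite sumr_pred1Z.
Qed.

Lemma euler_onD (A : {set 'I_n}) i v :
  euler_on A (D i v) = D i (euler_on A v) - (i \in A)%:R *: D i v.
Proof.
have XDD k : X k (D k (D i v)) = D i (X k (D k v)) - (k == i)%:R *: D k v.
  by rewrite eq_sym -(DX i k (D k v)) opprB addrC subrK DD.
rewrite /euler_on (eq_bigr _ (fun k _ => XDD k)) sumrB (linf_sum (D_lin i)).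
by rewrite sumr_pred1Z.
Qed.

Definition weyl_var (b : pred 'I_n) i := if b i then X i else D i.
Definition weyl_dual (b : pred 'I_n) i := if b i then D i else X i.
Definition weyl_deg (b : pred 'I_n) i : int := if b i then 1 else -1.

Variable b : pred 'I_n.

Lemma weyl_var_lin i : linear (weyl_var b i).
Proof. by rewrite /weyl_var; case: ifP. Qed.

Lemma weyl_dual_lin i : linear (weyl_dual b i).
Proof. by rewrite /weyl_dual; case: ifP. Qed.

Lemma weyl_dual_var_comm i j v : i != j ->
  weyl_dual b i (weyl_var b j v) = weyl_var b j (weyl_dual b i v).
Proof.
move=> ij; have ji : j != i by rewrite eq_sym.
rewrite /weyl_dual /weyl_var; case: (b i); case: (b j).
- exact: DX_comm.
- exact: DD.
- exact: XX.
- by rewrite DX_comm.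
Qed.

Lemma weyl_var_dual i v :
  weyl_var b i (weyl_dual b i v) = X i (D i v) + (~~ b i)%:R *: v.
Proof.
by rewrite /weyl_var /weyl_dual; case: (b i); rewrite ?DX_diag ?scale0r ?addr0 ?scale1r.
Qed.

Lemma weyl_dual_var i v :
  weyl_dual b i (weyl_var b i v) = X i (D i v) + (b i)%:R *: v.
Proof.
by rewrite /weyl_var /weyl_dual; case: (b i); rewrite ?DX_diag ?scale0r ?addr0 ?scale1r.
Qed.

Lemma euler_weyl_var i v :
  euler_on [set: 'I_n] (weyl_var b i v) =
  weyl_var b i (euler_on [set: 'I_n] v) + (weyl_deg b i)%:~R *: weyl_var b i v.
Proof.
rewrite /weyl_var /weyl_deg; case: (b i).
  by rewrite euler_onX inE.
by rewrite euler_onD inE scaleN1r scale1r.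
Qed.

Lemma euler_on_weyl_var (A : {set 'I_n}) i v : i \notin A ->
  euler_on A (weyl_var b i v) = weyl_var b i (euler_on A v).
Proof.
move=> /negbTE iA; rewrite /weyl_var; case: (b i);
  by rewrite ?euler_onX ?euler_onD iA scale0r ?addr0 ?subr0.
Qed.

Lemma kcontraction_weyl (S J : {set 'I_n}) v :
  kcontraction (weyl_var b) S (weyl_dual b) J v =
  euler_on S v + (\sum_(i in S) (b i == (i \in J))%:R) *: v.
Proof.
rewrite /kcontraction /euler_on scaler_suml -big_split (big_setID J) /= addrC setIC.
congr (_ + _); apply: eq_bigr => i /[!inE].
  by case/andP => /negbTE -> _; rewrite eqbF_neg weyl_var_dual.
by case/andP => _ ->; rewrite eqb_id weyl_dual_var.
Qed.

Lemma weyl_contraction_scalar (S J : {set 'I_n}) (d : int) : J \subset S ->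
  (d + \sum_(i in S) (~~ b i)%:Z)%:~R =
  (d - \sum_(i in J) weyl_deg b i)%:~R + \sum_(i in S) (b i == (i \in J))%:R :> K.
Proof.
move=> JS.
have -> : \sum_(i in S) (b i == (i \in J))%:R = (\sum_(i in S) (b i == (i \in J))%:Z)%:~R :> K.
  by rewrite rmorph_sum.
rewrite -intrD -addrA; congr ((d + _)%:~R).
rewrite [in LHS](big_setID J) [X in _ + X](big_setID J) /= (setIidPr JS) addrA.
congr (_ + _); last by apply: eq_bigr => i /[!inE] /andP [/negbTE -> _]; rewrite eqbF_neg.
rewrite -sumrN -big_split; apply: eq_bigr => i ->; rewrite eqb_id /weyl_deg.
by case: (b i).
Qed.

Theorem koszul_weyl_gen_eulerian (hom : int -> pred V) (S : {set 'I_n}) :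
  gen_eulerian hom X D ->
  koszul_gen_eulerian hom (weyl_var b) (weyl_deg b) S (euler_on (~: S))
    (\sum_(i in S) (~~ b i)%:Z).
Proof.
move=> V_eulerian nu d f f_cycle f_hom.
(* [N J] is the Euler operator shifted by the degree of the [J]-component of [f];
   [T = N - P] no longer depends on [J]. *)
pose N (J : {set 'I_n}) v :=
  euler_on [set: 'I_n] v - (d - \sum_(i in J) weyl_deg b i)%:~R *: v.
pose T (J : {set 'I_n}) v :=
  euler_on (~: S) v - (d + \sum_(i in S) (~~ b i)%:Z)%:~R *: v.
have N_chain : kchain_map (weyl_var b) S N.
  apply: kchain_map_degree_shift => [|i v _]; first exact: weyl_var_lin.
  exact: euler_weyl_var.
have T_chain : kchain_map (weyl_var b) S T.
  apply: kchain_map_const_shift => [|i v iS]; first exact: weyl_var_lin.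
  by apply: euler_on_weyl_var; rewrite inE negbK.
have T_N_contraction (J : {set 'I_n}) v : J \subset S ->
    T J v = N J v - kcontraction (weyl_var b) S (weyl_dual b) J v.
  move=> JS; rewrite /T /N kcontraction_weyl (euler_on_setTC S).
  rewrite (weyl_contraction_scalar d JS) scalerDl [euler_on S v + _]addrC addrAC addrKA.
  by rewrite opprD addrA addrAC.
have Nf_nilpotent J : exists a, iter a (N J) (f J) = 0.
  have [a [_ Nf0]] := V_eulerian _ _ (f_hom J); exists a.
  by rewrite -Nf0; apply: eq_iter => v; rewrite /N euler_onT.
have N_lin J : linear (N J) by apply/linear_subZ/euler_on_lin.
have T_lin J : linear (T J) by apply/linear_subZ/euler_on_lin.
have dual_var_comm i j v : i \in S -> j \in S -> i != j ->
    weyl_dual b i (weyl_var b j v) = weyl_var b j (weyl_dual b i v).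
  by move=> _ _; apply: weyl_dual_var_comm.
exact: (kboundary_iter_nilpotent weyl_var_lin weyl_dual_lin dual_var_comm N_lin T_lin
  N_chain T_chain T_N_contraction f_cycle Nf_nilpotent).
Qed.

End WeylAlgebra.

Lemma eq_shifted_pow (K : fieldType) (V : lmodType K) (E E' : V -> V) c a :
  E =1 E' -> shifted_pow E c a =1 shifted_pow E' c a.
Proof. by move=> eqE; apply: eq_iter => v; rewrite eqE. Qed.

Lemma shifted_pow0 (K : fieldType) (V : lmodType K) c a (v : V) :
  shifted_pow (fun _ => 0) c a v = (- c%:~R) ^+ a *: v.
Proof.
elim: a => [|a IHa]; first by rewrite scale1r.
by rewrite /shifted_pow iterS -/(shifted_pow _ _ _ _) IHa sub0r -scaleNr scalerA exprS.
Qed.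

Lemma pchar0_intr_eq0 (K : fieldType) (c : int) :
  [pchar K] =i pred0 -> (c%:~R == 0 :> K) = (c == 0).
Proof.
move=> /pcharf0P K0; case: c => k; first by rewrite -pmulrn K0.
by rewrite NegzE intrN oppr_eq0 -pmulrn K0.
Qed.

Lemma sum1_ord_geq (n m : nat) : \sum_(i < n | (m <= i)%N) (1 : int) = (n - m)%N.
Proof. by rewrite -(@big_geq_mkord _ 0 +%R m n xpredT (fun _ => 1)) sumr_const_nat natz. Qed.

Section KoszulHomology.

Variables (K : fieldType) (n : nat) (V : lmodType K) (hom : int -> pred V).
Variables (u : 'I_n -> V -> V) (du : 'I_n -> int) (S : {set 'I_n}).

Lemma eq_koszul_gen_eulerian (E E' : V -> V) (c c' : int) :
  E =1 E' -> c = c' ->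
  koszul_gen_eulerian hom u du S E c -> koszul_gen_eulerian hom u du S E' c'.
Proof.
move=> eqE <- HE nu d f f_cycle f_hom; have [a [a_gt0 bnd]] := HE nu d f f_cycle f_hom.
by exists a; split=> //; apply: eq_kboundary bnd => I; apply: eq_shifted_pow.
Qed.

(* For the zero operator, [(0 - c)^a] is the scalar [(-c)^a], invertible when [c != 0]. *)
Lemma koszul_concentrated_gen_eulerian0 (d0 : int) :
  [pchar K] =i pred0 -> (forall i, linear (u i)) ->
  koszul_gen_eulerian hom u du S (fun _ => 0) (- d0) ->
  koszul_concentrated hom u du S d0.
Proof.
move=> K0 u_lin H0 nu d f f_cycle f_hom d_neq; have [a [_ bnd]] := H0 nu d f f_cycle f_hom.
have c_neq0 : (d - d0)%:~R != 0 :> K by rewrite pchar0_intr_eq0 // subr_eq0.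
have := kboundaryZD u_lin ((- (d - d0)%:~R) ^- a) bnd (kboundary0 S u_lin nu).
apply: eq_kboundary => I; rewrite shifted_pow0 addr0 scalerA mulVf ?scale1r //.
by rewrite expf_neq0 // oppr_eq0.
Qed.

End KoszulHomology.

Theorem theorem1p4 (K : fieldType) (n : nat) (V : lmodType K)
    (hom : int -> pred V) (X D : 'I_n -> V -> V) (r : nat) :
  [pchar K] =i pred0 ->
  graded_weyl_module hom X D ->
  gen_eulerian hom X D ->
  (1 <= r <= n)%N ->
  [/\ koszul_gen_eulerian hom D (fun _ => -1)
        [set i : 'I_n | (r.-1 <= i)%N] (euler X D r.-1) (n%:Z - r%:Z + 1),
      koszul_gen_eulerian hom X (fun _ => 1)
        [set i : 'I_n | (r.-1 <= i)%N] (euler X D r.-1) 0 &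
      koszul_concentrated hom
        (fun i => if (i < r.-1)%N then X i else D i)
        (fun i => if (i < r.-1)%N then 1 else -1)
        [set: 'I_n] (- n%:Z + r%:Z - 1)].
Proof.
move=> K0 [_ [X_lin [D_lin [XX [DD [DX _]]]]]] V_eulerian /andP [r_gt0 r_le_n].
have Weyl := koszul_weyl_gen_eulerian X_lin D_lin XX DD DX.
have euler_lt : euler_on X D (~: [set i : 'I_n | (r.-1 <= i)%N]) =1 euler X D r.-1.
  by move=> v; apply: eq_bigl => i; rewrite !inE -ltnNge.
have count_geq : \sum_(i < n | (r.-1 <= i)%N) (1 : int) = n%:Z - r%:Z + 1.
  by rewrite sum1_ord_geq; lia.
split.
- apply: eq_koszul_gen_eulerian (Weyl (fun _ => false) _ _ V_eulerian) => //.
  by rewrite -count_geq; apply: eq_big => // i; rewrite inE.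
- apply: eq_koszul_gen_eulerian (Weyl (fun _ => true) _ _ V_eulerian) => //.
  exact: big1.
- apply: koszul_concentrated_gen_eulerian0 => //; first exact: weyl_var_lin.
  apply: eq_koszul_gen_eulerian (Weyl (fun i => (i < r.-1)%N) _ _ V_eulerian).
    by move=> v; rewrite /euler_on setCT big_set0.
  have -> : - (- n%:Z + r%:Z - 1) = n%:Z - r%:Z + 1 by ring.
  rewrite -count_geq [RHS]big_mkcond; apply: eq_big => [i | i _]; first by rewrite inE.
  by rewrite -leqNgt; case: leqP.
Qed.
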